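(* Let $G$ be a discrete group and let $X$ be a $G$-boundary such that the action of $G$ on $X$ is not topologically free. Then for every $x\in X$ and every $t_1,\dots,t_n\in G$, the subgroup $\bigcap_{i=1}^n t_iG_xt_i^{-1}$ is non-trivial, where $G_x$ is the stabilizer of $x$. If moreover $G$ has no non-trivial finite normal subgroup, then this intersection is infinite.
   Context: A compact Hausdorff $G$-space $X$ is a $G$-boundary if the action is minimal (every orbit dense) and strongly proximal (for every pair of Borel probability measures $\mu,\nu$ on $X$ there is a net $t_i\in G$ with $\lim t_i\mu=\lim t_i\nu$ weak* ). The action is topologically free if for every $s\in G\setminus\{e\}$ the fixed point set $\{x: sx=x\}$ has empty interior. $G_x=\{s\in G: sx=x\}$. *)

From Stdlib Require Import Reals List.
Open Scope R_scope.

Record is_group (G : Type) (mul : G -> G -> G) (inv : G -> G) (e : G) : Prop := {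
  grp_assoc : forall a b c, mul a (mul b c) = mul (mul a b) c;
  grp_idl : forall a, mul e a = a;
  grp_idr : forall a, mul a e = a;
  grp_invl : forall a, mul (inv a) a = e;
  grp_invr : forall a, mul a (inv a) = e }.

Definition is_subgroup {G : Type} (mul : G -> G -> G) (inv : G -> G) (e : G)
  (H : G -> Prop) : Prop :=
  H e /\ (forall a b, H a -> H b -> H (mul a b)) /\ (forall a, H a -> H (inv a)).

Definition is_normal {G : Type} (mul : G -> G -> G) (inv : G -> G)
  (H : G -> Prop) : Prop :=
  forall g h, H h -> H (mul (mul g h) (inv g)).

Definition finite_set {T : Type} (A : T -> Prop) : Prop :=
  exists l : list T, forall a, A a -> In a l.

Definition no_nontrivial_finite_normal {G : Type} (mul : G -> G -> G)
  (inv : G -> G) (e : G) : Prop :=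
  forall N : G -> Prop, is_subgroup mul inv e N -> is_normal mul inv N ->
    finite_set N -> forall s, N s -> s = e.

Record is_topology (X : Type) (op : (X -> Prop) -> Prop) : Prop := {
  top_full : op (fun _ => True);
  top_empty : op (fun _ => False);
  top_inter : forall U V, op U -> op V -> op (fun x => U x /\ V x);
  top_union : forall (F : (X -> Prop) -> Prop),
      (forall U, F U -> op U) -> op (fun x => exists U, F U /\ U x) }.

Definition compact_sp {X : Type} (op : (X -> Prop) -> Prop) : Prop :=
  forall (I : Type) (U : I -> X -> Prop), (forall i, op (U i)) ->
    (forall x, exists i, U i x) ->
    exists l : list I, forall x, exists i, In i l /\ U i x.

Definition hausdorff_sp {X : Type} (op : (X -> Prop) -> Prop) : Prop :=
  forall x y, x <> y -> exists U V, op U /\ op V /\ U x /\ V y /\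
    (forall z, U z -> V z -> False).

Definition continuous_map {X : Type} (op : (X -> Prop) -> Prop) (f : X -> X) : Prop :=
  forall U, op U -> op (fun x => U (f x)).

Definition continuous_real {X : Type} (op : (X -> Prop) -> Prop) (f : X -> R) : Prop :=
  forall x eps, 0 < eps -> exists U, op U /\ U x /\
    forall y, U y -> Rabs (f y - f x) < eps.

Definition sigma_algebra {X : Type} (S : (X -> Prop) -> Prop) : Prop :=
  S (fun _ => True) /\
  (forall A, S A -> S (fun x => ~ A x)) /\
  (forall A : nat -> X -> Prop, (forall n, S (A n)) -> S (fun x => exists n, A n x)).

Definition borel {X : Type} (op : (X -> Prop) -> Prop) (A : X -> Prop) : Prop :=
  forall S : (X -> Prop) -> Prop, sigma_algebra S -> (forall U, op U -> S U) -> S A.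

Definition prob_measure {X : Type} (op : (X -> Prop) -> Prop)
  (mu : (X -> Prop) -> R) : Prop :=
  (forall A, borel op A -> 0 <= mu A) /\
  mu (fun _ => True) = 1 /\
  (forall A : nat -> X -> Prop, (forall n, borel op (A n)) ->
     (forall n m x, n <> m -> A n x -> A m x -> False) ->
     infinite_sum (fun n => mu (A n)) (mu (fun x => exists n, A n x))).

Definition lower_sum {X : Type} (op : (X -> Prop) -> Prop) (mu : (X -> Prop) -> R)
  (f : X -> R) (s : R) : Prop :=
  exists l : list (R * (X -> Prop)),
    (forall p, In p l -> borel op (snd p)) /\
    (forall x, exists p, In p l /\ snd p x) /\
    (forall (i j : nat) x, i <> j -> (i < length l)%nat -> (j < length l)%nat ->
        snd (nth i l (0%R, fun _ => False)) x ->
        snd (nth j l (0%R, fun _ => False)) x -> False) /\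
    (forall p x, In p l -> snd p x -> fst p <= f x) /\
    s = fold_right (fun p acc => fst p * mu (snd p) + acc) 0 l.

(* Integral of a bounded Borel function (e.g. continuous on a compact_sp space)
   against a finite measure: supremum of the lower simple sums. *)
Definition integral_is {X : Type} (op : (X -> Prop) -> Prop) (mu : (X -> Prop) -> R)
  (f : X -> R) (v : R) : Prop :=
  is_lub (lower_sum op mu f) v.

Definition push {X : Type} (h : X -> X) (mu : (X -> Prop) -> R) : (X -> Prop) -> R :=
  fun A => mu (fun x => A (h x)).

Record directed (D : Type) (le : D -> D -> Prop) : Prop := {
  dir_inh : inhabited D;
  dir_refl : forall d, le d d;
  dir_trans : forall a b c, le a b -> le b c -> le a c;
  dir_up : forall a b, exists c, le a c /\ le b c }.

Definition weak_star_lim {X : Type} (op : (X -> Prop) -> Prop) {D : Type}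
  (le : D -> D -> Prop) (nu : D -> (X -> Prop) -> R) (lam : (X -> Prop) -> R) : Prop :=
  forall f : X -> R, continuous_real op f ->
    forall v, integral_is op lam f v ->
    forall eps, 0 < eps -> exists d0, forall d, le d0 d ->
      forall w, integral_is op (nu d) f w -> Rabs (w - v) < eps.

Definition is_action {G X : Type} (mul : G -> G -> G) (e : G)
  (op : (X -> Prop) -> Prop) (act : G -> X -> X) : Prop :=
  (forall x, act e x = x) /\
  (forall g h x, act (mul g h) x = act g (act h x)) /\
  (forall g, continuous_map op (act g)).

Definition minimal_action {G X : Type} (op : (X -> Prop) -> Prop) (act : G -> X -> X) : Prop :=
  forall x U, op U -> (exists y, U y) -> exists g, U (act g x).

Definition strongly_proximal {G X : Type} (op : (X -> Prop) -> Prop)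
  (act : G -> X -> X) : Prop :=
  forall mu nu, prob_measure op mu -> prob_measure op nu ->
    exists (D : Type) (le : D -> D -> Prop) (t : D -> G), directed D le /\
      exists lam, prob_measure op lam /\
        weak_star_lim op le (fun d => push (act (t d)) mu) lam /\
        weak_star_lim op le (fun d => push (act (t d)) nu) lam.

Definition G_boundary {G X : Type} (op : (X -> Prop) -> Prop) (act : G -> X -> X) : Prop :=
  minimal_action op act /\ strongly_proximal op act.

Definition topologically_free {G X : Type} (e : G) (op : (X -> Prop) -> Prop)
  (act : G -> X -> X) : Prop :=
  forall s, s <> e -> forall U, op U -> (forall y, U y -> act s y = y) ->
    forall y, ~ U y.

Definition stabilizer {G X : Type} (act : G -> X -> X) (x : X) : G -> Prop :=
  fun s => act s x = x.

Definition conj_intersection {G X : Type} (mul : G -> G -> G) (inv : G -> G)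
  (act : G -> X -> X) (x : X) (ts : list G) : G -> Prop :=
  fun s => forall t, In t ts -> exists h, stabilizer act x h /\ s = mul (mul t h) (inv t).

(* If the action is not topologically free, some [s0 <> e] fixes a nonempty open set [U]
   pointwise. Strong proximality, tested against Urysohn functions, lets one group element
   [g] move finitely many points [t x] simultaneously into [U] (compare the uniform measure
   on these points with a Dirac mass); then [g^-1 s0 g] fixes every [t x], i.e. lies in
   every [t G_x t^-1].
   If such an intersection were finite, adjoining a [g] for which some member moves [g x]
   would strictly shrink it; when no such [g] is left, the intersection consists of elements
   fixing the whole orbit [G x], a finite normal subgroup, hence trivial, contradicting the
   first part. *)

From Stdlib Require Import Reals List Arith Lia Lra Classical ClassicalEpsilon
  FunctionalExtensionality PropExtensionality.
Open Scope R_scope.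

Lemma set_ext {X : Type} (A B : X -> Prop) : (forall x, A x <-> B x) -> A = B.
Proof.
  intro H; apply functional_extensionality; intro x.
  apply propositional_extensionality; auto.
Qed.

Definition indic (P : Prop) : R := if excluded_middle_informative P then 1 else 0.

Lemma indic_true (P : Prop) : P -> indic P = 1.
Proof. unfold indic; destruct excluded_middle_informative; tauto. Qed.

Lemma indic_false (P : Prop) : ~ P -> indic P = 0.
Proof. unfold indic; destruct excluded_middle_informative; tauto. Qed.

Lemma indic_bounds (P : Prop) : 0 <= indic P <= 1.
Proof. unfold indic; destruct excluded_middle_informative; lra. Qed.

Definition lsum {A : Type} (f : A -> R) (l : list A) : R :=
  fold_right (fun a acc => f a + acc) 0 l.

Lemma lsum_cons {A} (f : A -> R) a l : lsum f (a :: l) = f a + lsum f l.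
Proof. reflexivity. Qed.

Lemma lsum_le {A} (f g : A -> R) l :
  (forall a, In a l -> f a <= g a) -> lsum f l <= lsum g l.
Proof.
  induction l as [|a l IH]; intro H; [simpl; lra|]. rewrite !lsum_cons.
  assert (f a <= g a) by (apply H; left; auto).
  assert (lsum f l <= lsum g l) by (apply IH; intros; apply H; right; auto). lra.
Qed.

Lemma lsum_ext {A} (f g : A -> R) l :
  (forall a, In a l -> f a = g a) -> lsum f l = lsum g l.
Proof. intro H; apply Rle_antisym; apply lsum_le; intros a Ha; rewrite H; auto; lra. Qed.

Lemma lsum_plus {A} (f g : A -> R) l : lsum (fun a => f a + g a) l = lsum f l + lsum g l.
Proof. induction l; simpl; lra. Qed.

Lemma lsum_scal {A} (f : A -> R) c l : lsum (fun a => c * f a) l = c * lsum f l.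
Proof. induction l as [|a l IH]; rewrite ?lsum_cons, ?IH; simpl; lra. Qed.

Lemma lsum_comm {A B} (F : A -> B -> R) l1 l2 :
  lsum (fun a => lsum (F a) l2) l1 = lsum (fun b => lsum (fun a => F a b) l1) l2.
Proof.
  induction l1 as [|a l1 IH]; simpl.
  - induction l2; simpl; lra.
  - rewrite IH, <- lsum_plus. reflexivity.
Qed.

Lemma lsum_map {A B} (f : B -> R) (h : A -> B) l : lsum f (map h l) = lsum (fun a => f (h a)) l.
Proof. induction l; simpl; congruence. Qed.

Lemma lsum_const {A} (c : R) (l : list A) : lsum (fun _ => c) l = c * INR (length l).
Proof. induction l as [|a l IH]; [simpl; lra|]. rewrite lsum_cons, IH, length_cons, S_INR. lra. Qed.

Lemma lsum_nonneg {A} (f : A -> R) l : (forall a, In a l -> 0 <= f a) -> 0 <= lsum f l.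
Proof. intro H. apply (lsum_le (fun _ => 0)) in H. rewrite lsum_const in H. lra. Qed.

Lemma lsum_le_length_pred {A} (f : A -> R) l y :
  In y l -> (forall a, In a l -> f a <= 1) -> lsum f l <= INR (length l) - 1 + f y.
Proof.
  intros Hy Hf. induction l as [|a l IH]; [contradiction|].
  rewrite lsum_cons, length_cons, S_INR.
  assert (Hl : lsum f l <= INR (length l)).
  { rewrite <- (Rmult_1_l (INR _)), <- lsum_const. apply lsum_le; intros; apply Hf; right; auto. }
  destruct Hy as [<-|Hy]; [lra|].
  assert (f a <= 1) by (apply Hf; left; auto).
  assert (lsum f l <= INR (length l) - 1 + f y) by (apply IH; auto; intros; apply Hf; right; auto).
  lra.
Qed.

Lemma length_pos {A} (l : list A) : l <> nil -> 0 < INR (length l).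
Proof. intro H. destruct l; [congruence|]. apply lt_0_INR. simpl; lia. Qed.

Lemma average_near_one_pos {A} (f : A -> R) l y : In y l -> (forall a, In a l -> f a <= 1) ->
  1 - / INR (length l) < lsum f l / INR (length l) -> 0 < f y.
Proof.
  intros Hy Hf Havg. pose proof (lsum_le_length_pred f l y Hy Hf).
  assert (HN : 0 < INR (length l)) by (apply length_pos; intros ->; contradiction).
  apply (Rmult_lt_compat_r (INR (length l))) in Havg; auto.
  replace (lsum f l / INR (length l) * INR (length l)) with (lsum f l) in Havg by (field; lra).
  replace ((1 - / INR (length l)) * INR (length l)) with (INR (length l) - 1) in Havg
    by (field; lra).
  lra.
Qed.

Fixpoint fsum (g : nat -> R) (n : nat) : R :=
  match n with O => 0 | S n' => g O + fsum (fun k => g (S k)) n' end.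

Lemma fsum_S g n : fsum g (S n) = fsum g n + g n.
Proof.
  revert g; induction n as [|n IH]; intro g; simpl; [lra|].
  simpl in IH. rewrite (IH (fun k => g (S k))). lra.
Qed.

Lemma sum_f_R0_fsum g n : sum_f_R0 g n = fsum g (S n).
Proof. induction n as [|n IH]; [simpl; lra|]. rewrite (fsum_S g (S n)), <- IH. reflexivity. Qed.

Lemma fsum_zero g n : (forall k, (k < n)%nat -> g k = 0) -> fsum g n = 0.
Proof. induction n as [|n IH]; intro H; [reflexivity|]. rewrite fsum_S, IH, H; auto; lra. Qed.

Lemma fsum_eventually_const g N n :
  (forall k, (N <= k)%nat -> g k = 0) -> (N <= n)%nat -> fsum g n = fsum g N.
Proof. intros H Hn; induction Hn as [|m Hm IH]; [reflexivity|]. rewrite fsum_S, IH, H; [lra|lia]. Qed.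

Lemma lsum_fsum {A} (f : A -> R) l d : lsum f l = fsum (fun n => f (nth n l d)) (length l).
Proof. induction l; simpl; [lra|]. rewrite IHl. reflexivity. Qed.

Lemma infinite_sum_eventually_zero g N :
  (forall k, (N <= k)%nat -> g k = 0) -> infinite_sum g (fsum g N).
Proof.
  intros H eps Heps. exists N. intros n Hn.
  rewrite sum_f_R0_fsum, (fsum_eventually_const g N (S n)) by (auto; lia).
  unfold Rdist. rewrite Rminus_diag, Rabs_R0; lra.
Qed.

Lemma infinite_sum_plus s t a b :
  infinite_sum s a -> infinite_sum t b -> infinite_sum (fun n => s n + t n) (a + b).
Proof.
  intros Hs Ht. change (Un_cv (sum_f_R0 (fun n => s n + t n)) (a + b)).
  replace (sum_f_R0 (fun n => s n + t n)) with (fun n => sum_f_R0 s n + sum_f_R0 t n)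
    by (apply functional_extensionality; intro; rewrite plus_sum; reflexivity).
  now apply CV_plus.
Qed.

Lemma Un_cv_const c : Un_cv (fun _ => c) c.
Proof. intros eps Heps. exists O. intros. unfold Rdist. rewrite Rminus_diag, Rabs_R0; lra. Qed.

Lemma infinite_sum_scal s a c : infinite_sum s a -> infinite_sum (fun n => s n * c) (a * c).
Proof.
  intro Hs. change (Un_cv (sum_f_R0 (fun n => s n * c)) (a * c)).
  replace (sum_f_R0 (fun n => s n * c)) with (fun n => sum_f_R0 s n * c)
    by (apply functional_extensionality; intro; rewrite <- scal_sum; ring).
  apply CV_mult; [exact Hs|apply Un_cv_const].
Qed.

Lemma infinite_sum_lsum {A} (F : nat -> A -> R) (L : A -> R) l :
  (forall a, infinite_sum (fun n => F n a) (L a)) ->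
  infinite_sum (fun n => lsum (F n) l) (lsum L l).
Proof.
  intro H. induction l as [|a l IH]; simpl.
  - apply (infinite_sum_eventually_zero _ 0). auto.
  - apply infinite_sum_plus; auto.
Qed.

Lemma infinite_sum_const_self c : infinite_sum (fun _ => c) c -> c = 0.
Proof.
  intro H. change (Un_cv (sum_f_R0 (fun _ => c)) c) in H.
  pose proof (CV_minus _ _ _ _ (CV_shift' _ 1 _ H) H) as Hd; cbv beta in Hd.
  replace (fun n => sum_f_R0 (fun _ => c) (n + 1) - sum_f_R0 (fun _ => c) n) with (fun _ : nat => c)
    in Hd by (apply functional_extensionality; intro n;
              rewrite !sum_cte, Nat.add_1_r, (S_INR (S n)); ring).
  pose proof (UL_sequence _ _ _ Hd (Un_cv_const c)). lra.
Qed.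

(** * Borel probability measures *)

Section Measures.
Context {X : Type} (op : (X -> Prop) -> Prop).

Lemma borel_open U : op U -> borel op U.
Proof. intros HU S HS Ho. auto. Qed.

Lemma borel_compl A : borel op A -> borel op (fun x => ~ A x).
Proof. intros HA S HS Ho. apply (proj1 (proj2 HS)), HA; auto. Qed.

Lemma borel_True : borel op (fun _ => True).
Proof. intros S HS _. apply HS. Qed.

Lemma borel_ext A B : (forall x, A x <-> B x) -> borel op A -> borel op B.
Proof. intro H; rewrite (set_ext A B H); auto. Qed.

Lemma borel_False : borel op (fun _ => False).
Proof. apply (borel_ext (fun x => ~ True)); [tauto|apply borel_compl, borel_True]. Qed.

Definition pieces_disjoint (l : list (R * (X -> Prop))) : Prop :=
  forall (i j : nat) x, i <> j -> (i < length l)%nat -> (j < length l)%nat ->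
    snd (nth i l (0, fun _ => False)) x -> snd (nth j l (0, fun _ => False)) x -> False.

Lemma pieces_disjoint_tail p l : pieces_disjoint (p :: l) -> pieces_disjoint l.
Proof. intros H i j x Hij Hi Hj. apply (H (S i) (S j) x); simpl; auto; lia. Qed.

Lemma pieces_disjoint_head p l y :
  pieces_disjoint (p :: l) -> snd p y -> forall q, In q l -> ~ snd q y.
Proof.
  intros H Hp q Hq Hqy. destruct (In_nth l q (0, fun _ => False) Hq) as (j & Hj & <-).
  apply (H 0%nat (S j) y); simpl; auto; lia.
Qed.

Lemma prob_empty mu : prob_measure op mu -> mu (fun _ => False) = 0.
Proof.
  intros (_ & _ & Hadd).
  specialize (Hadd (fun _ _ => False) (fun _ => borel_False) ltac:(tauto)).
  rewrite (set_ext (fun x => exists n : nat, False) (fun _ => False)) in Hadd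
    by (intros; split; [intros [_ []]|tauto]).
  now apply infinite_sum_const_self.
Qed.

Lemma prob_partition mu l : prob_measure op mu ->
  (forall p, In p l -> borel op (snd p)) -> (forall x, exists p, In p l /\ snd p x) ->
  pieces_disjoint l -> lsum (fun p => mu (snd p)) l = 1.
Proof.
  intros Hmu Hb Hcov HD. pose proof Hmu as (_ & H1 & Hadd).
  set (B := fun n => snd (nth n l (0, fun _ => False))).
  assert (Hover : forall n, (length l <= n)%nat -> B n = fun _ => False)
    by (intros n Hn; unfold B; rewrite nth_overflow; auto).
  assert (HB : forall n, borel op (B n)).
  { intro n. destruct (Nat.lt_ge_cases n (length l)) as [Hn|Hn].
    - apply Hb, nth_In; auto.
    - rewrite Hover by auto. apply borel_False. }
  assert (HDB : forall n m x, n <> m -> B n x -> B m x -> False).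
  { intros n m x Hnm Hn Hm.
    destruct (Nat.lt_ge_cases n (length l)); [|rewrite Hover in Hn; auto].
    destruct (Nat.lt_ge_cases m (length l)); [|rewrite Hover in Hm; auto].
    eapply HD; eauto. }
  specialize (Hadd B HB HDB).
  rewrite (set_ext (fun x => exists n, B n x) (fun _ => True)), H1 in Hadd.
  2:{ intro x; split; auto. intros _. destruct (Hcov x) as (p & Hp & Hpx).
      destruct (In_nth l p (0, fun _ => False) Hp) as (j & Hj & Hjp).
      exists j. unfold B. rewrite Hjp. auto. }
  rewrite (lsum_fsum _ l (0, fun _ => False)). eapply uniqueness_sum; [|exact Hadd].
  apply infinite_sum_eventually_zero. intros k Hk.
  change (mu (B k) = 0). rewrite Hover by auto. now apply prob_empty.
Qed.

Lemma lower_sum_prob_le mu f s :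
  prob_measure op mu -> (forall x, f x <= 1) -> lower_sum op mu f s -> s <= 1.
Proof.
  intros Hmu Hf (l & Hb & Hcov & HD & Hlb & ->).
  change (fold_right _ 0 l) with (lsum (fun p => fst p * mu (snd p)) l).
  rewrite <- (prob_partition mu l Hmu Hb Hcov HD). apply lsum_le. intros p Hp.
  destruct (classic (exists x, snd p x)) as [[x Hx]|Hn].
  - pose proof (Hlb p x Hp Hx). pose proof (Hf x).
    pose proof (proj1 Hmu (snd p) (Hb p Hp)). nra.
  - rewrite (set_ext (snd p) (fun _ => False)) by firstorder.
    rewrite prob_empty; auto; lra.
Qed.

Lemma integral_exists mu f B : (forall x, 0 <= f x) ->
  (forall s, lower_sum op mu f s -> s <= B) -> exists v, integral_is op mu f v.
Proof.
  intros Hf HB.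
  assert (Hzero : lower_sum op mu f (0 * mu (fun _ => True) + 0)).
  { exists ((0, fun _ => True) :: nil). repeat split.
    - intros p [<-|[]]. apply borel_True.
    - intros x. exists (0, fun _ : X => True). simpl; auto.
    - intros i j x Hij Hi Hj. simpl in Hi, Hj. lia.
    - intros p x [<-|[]] _. apply Hf. }
  destruct (completeness (lower_sum op mu f)) as [v Hv]; [exists B; exact HB|eauto|].
  exists v. exact Hv.
Qed.

Lemma integral_prob_exists mu f : prob_measure op mu -> (forall x, 0 <= f x <= 1) ->
  exists v, integral_is op mu f v.
Proof.
  intros Hmu Hf. apply (integral_exists mu f 1); [intro; apply Hf|].
  intro s. apply lower_sum_prob_le; auto. intro; apply Hf.
Qed.

Definition uniform (ys : list X) (A : X -> Prop) : R :=
  lsum (fun y => indic (A y)) ys / INR (length ys).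

Lemma uniform_push (h : X -> X) ys : push h (uniform ys) = uniform (map h ys).
Proof.
  apply functional_extensionality; intro A.
  unfold push, uniform. rewrite length_map, lsum_map. reflexivity.
Qed.

Lemma indic_series (A : nat -> X -> Prop) y :
  (forall n m x, n <> m -> A n x -> A m x -> False) ->
  infinite_sum (fun n => indic (A n y)) (indic (exists n, A n y)).
Proof.
  intros HD. destruct (classic (exists n, A n y)) as [[n0 Hn0]|Hn].
  - assert (Hz : forall k, k <> n0 -> indic (A k y) = 0)
      by (intros k Hk; apply indic_false; intro; eapply HD; eauto).
    replace (indic (exists n, A n y)) with (fsum (fun n => indic (A n y)) (S n0)).
    + apply infinite_sum_eventually_zero. intros k Hk; apply Hz; lia.
    + rewrite fsum_S, fsum_zero, !indic_true by (eauto; intros; apply Hz; lia). lra.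
  - rewrite indic_false by auto. apply (infinite_sum_eventually_zero _ 0).
    intros k _. apply indic_false. eauto.
Qed.

Lemma uniform_prob ys : ys <> nil -> prob_measure op (uniform ys).
Proof.
  intros Hne. pose proof (length_pos ys Hne). unfold uniform. split; [|split].
  - intros A _. apply Rmult_le_pos; [|left; apply Rinv_0_lt_compat; auto].
    apply lsum_nonneg; intros; apply indic_bounds.
  - rewrite (lsum_ext _ (fun _ => 1)), lsum_const by (intros; apply indic_true; auto).
    field. lra.
  - intros A _ HD. apply infinite_sum_scal, infinite_sum_lsum. intro y. now apply indic_series.
Qed.

(* By disjointness only the piece containing [y] contributes. *)
Lemma lsum_pieces_at_le (l : list (R * (X -> Prop))) (f : X -> R) y :
  pieces_disjoint l -> (forall p x, In p l -> snd p x -> fst p <= f x) ->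
  (exists p, In p l /\ snd p y) -> lsum (fun p => fst p * indic (snd p y)) l <= f y.
Proof.
  induction l as [|a l IH]; intros HD Hlb [p [Hp Hpy]]; [contradiction|]. rewrite lsum_cons.
  destruct (classic (snd a y)) as [Ha|Ha].
  - rewrite indic_true, (lsum_ext _ (fun _ => 0)), lsum_const by
      (auto; intros q Hq; rewrite indic_false by (eapply pieces_disjoint_head; eauto); lra).
    assert (fst a <= f y) by (apply Hlb; simpl; auto). lra.
  - rewrite indic_false by auto. destruct Hp as [<-|Hp]; [contradiction|].
    assert (lsum (fun p => fst p * indic (snd p y)) l <= f y).
    { apply IH; eauto using pieces_disjoint_tail. intros; apply Hlb; simpl; auto. }
    lra.
Qed.

Lemma lower_sum_uniform_le ys f s : ys <> nil ->
  lower_sum op (uniform ys) f s -> s <= lsum f ys / INR (length ys).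
Proof.
  intros Hne (l & _ & Hcov & HD & Hlb & ->). pose proof (length_pos ys Hne).
  change (fold_right _ 0 l) with (lsum (fun p => fst p * uniform ys (snd p)) l).
  rewrite (lsum_ext _ (fun p => / INR (length ys) * lsum (fun y => fst p * indic (snd p y)) ys)).
  2:{ intros p _. unfold uniform. rewrite lsum_scal. field. lra. }
  rewrite lsum_scal, lsum_comm. unfold Rdiv. rewrite Rmult_comm.
  apply Rmult_le_compat_r; [left; apply Rinv_0_lt_compat; auto|].
  apply lsum_le. intros y _. now apply lsum_pieces_at_le.
Qed.

Lemma integral_uniform_le ys f v : ys <> nil ->
  integral_is op (uniform ys) f v -> v <= lsum f ys / INR (length ys).
Proof. intros Hne Hv. apply Hv. intro s. now apply lower_sum_uniform_le. Qed.

(* The partition [{f >= f z}, {f < f z}] witnesses the lower sum [f z] for the Dirac mass at [z]. *)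
Lemma integral_dirac_ge z f v : (forall x, 0 <= f x) -> borel op (fun x => f x < f z) ->
  integral_is op (uniform (z :: nil)) f v -> f z <= v.
Proof.
  intros Hf Hlt Hv. apply Hv.
  exists ((f z, fun x => f z <= f x) :: (0, fun x => f x < f z) :: nil). repeat split.
  - intros p [<-|[<-|[]]]; simpl; auto.
    apply (borel_ext (fun x => ~ f x < f z)); [intro; lra|now apply borel_compl].
  - intro x. destruct (Rle_lt_dec (f z) (f x)).
    + exists (f z, fun x => f z <= f x); simpl; auto.
    + exists (0, fun x => f x < f z); simpl; auto.
  - intros [|[|i]] [|[|j]] x Hij Hi Hj; simpl in *; try lia; lra.
  - intros p x [<-|[<-|[]]]; simpl; auto.
  - unfold uniform. simpl. rewrite (indic_true (f z <= f z)), indic_false by lra. field.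
Qed.

End Measures.

(** * Compact Hausdorff spaces *)

Section Topology.
Context {X : Type} (op : (X -> Prop) -> Prop) (Htop : is_topology X op).

Definition closure (A : X -> Prop) (x : X) : Prop :=
  forall U, op U -> U x -> exists y, U y /\ A y.

Lemma subset_closure A x : A x -> closure A x.
Proof. intros Hx U _ HU. eauto. Qed.

Lemma open_ext A B : (forall x, A x <-> B x) -> op A -> op B.
Proof. intro H; rewrite (set_ext A B H); auto. Qed.

Lemma open_True : op (fun _ => True).
Proof. apply Htop. Qed.

Lemma open_inter A B : op A -> op B -> op (fun x => A x /\ B x).
Proof. apply Htop. Qed.

Lemma open_union {I : Type} (P : I -> Prop) (W : I -> X -> Prop) :
  (forall i, P i -> op (W i)) -> op (fun z => exists i, P i /\ W i z).
Proof.
  intro H. apply (open_ext (fun z => exists U, (exists i, P i /\ U = W i) /\ U z)).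
  - intro z; split.
    + intros (U & (i & HP & ->) & Hz); eauto.
    + intros (i & HP & Hz). exists (W i); eauto.
  - apply Htop. intros U (i & HP & ->); auto.
Qed.

Lemma open_cond (P : Prop) (W : X -> Prop) : (P -> op W) -> op (fun z => P -> W z).
Proof.
  intro H. destruct (classic P) as [HP|HP].
  - apply (open_ext W); [intro; tauto|auto].
  - apply (open_ext (fun _ => True)); [intro; tauto|apply open_True].
Qed.

Lemma open_finite_inter {I : Type} (l : list I) (P : I -> Prop) (W : I -> X -> Prop) :
  (forall i, P i -> op (W i)) -> op (fun z => forall i, In i l -> P i -> W i z).
Proof.
  intro H. induction l as [|a l IH].
  - apply (open_ext (fun _ => True)); [intro; simpl; tauto|apply open_True].
  - apply (open_ext (fun z => (P a -> W a z) /\ (forall i, In i l -> P i -> W i z))).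
    + intro z; simpl; split.
      * intros [H1 H2] i [<-|Hi]; auto.
      * intros H'; split; auto.
    + apply open_inter; auto. apply open_cond; auto.
Qed.

Lemma not_closure_nbhd A z : ~ closure A z -> exists N, op N /\ N z /\ forall q, N q -> ~ A q.
Proof.
  intro H. apply not_all_ex_not in H as [N HN]. exists N.
  apply imply_to_and in HN as [HoN HN]. apply imply_to_and in HN as [HzN HN].
  repeat split; auto. intros q Hq Hq'. apply HN; eauto.
Qed.

Lemma open_not_closure A : op (fun x => ~ closure A x).
Proof.
  apply (open_ext (fun x => exists U, (op U /\ forall q, U q -> ~ closure A q) /\ U x)).
  - intro x; split.
    + intros (U & (_ & HU) & Hx). auto.
    + intro H. destruct (not_closure_nbhd A x H) as (N & HN & Hx & Hd).
      exists N. repeat split; auto.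
      intros q Hq Hc. destruct (Hc N HN Hq) as (r & Hr & Hr'). eapply Hd; eauto.
  - apply Htop. intros U [HU _]; auto.
Qed.

Lemma closure_finite_union {I : Type} (l : list I) (P : I -> Prop) (W : I -> X -> Prop) z :
  closure (fun q => exists i, In i l /\ P i /\ W i q) z ->
  exists i, In i l /\ P i /\ closure (W i) z.
Proof.
  induction l as [|a l IH]; intro Hz.
  - destruct (Hz _ open_True Logic.I) as (q & _ & i & [] & _).
  - destruct (classic (P a /\ closure (W a) z)) as [[HPa Ha]|Ha]; [exists a; simpl; auto|].
    destruct IH as (i & Hi & HPi & Hc); [|exists i; simpl; auto].
    intros U HU HzU.
    assert (Hnb : exists N, op N /\ N z /\ forall q, N q -> P a -> ~ W a q).
    { destruct (classic (P a)) as [HPa|HPa].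
      - destruct (not_closure_nbhd (W a) z) as (N & HN & HzN & Hd); [tauto|].
        exists N; auto.
      - exists (fun _ => True). split; [apply open_True|tauto]. }
    destruct Hnb as (N & HN & HzN & Hd).
    destruct (Hz (fun q => U q /\ N q)) as (q & [HqU HqN] & i & [<-|Hi] & HPi & HWi);
      [apply open_inter; auto|auto|exfalso; eapply Hd; eauto|]. exists q; split; eauto.
Qed.

Lemma open_gt f a : continuous_real op f -> op (fun x => a < f x).
Proof.
  intro Hf. apply (open_ext (fun x => exists V, (op V /\ forall y, V y -> a < f y) /\ V x)).
  - intro x; split.
    + intros (V & (_ & HV) & Hx); auto.
    + intro Hx. destruct (Hf x (f x - a)) as (V & HV & HxV & Hd); [lra|].
      exists V. repeat split; auto. intros y Hy. specialize (Hd y Hy). apply Rabs_def2 in Hd. lra.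
  - apply Htop. intros V [HV _]; auto.
Qed.

Lemma open_lt f a : continuous_real op f -> op (fun x => f x < a).
Proof.
  intro Hf. apply (open_ext (fun x => - a < - f x)); [intro; lra|].
  apply open_gt. intros x eps Heps. destruct (Hf x eps Heps) as (U & HU & Hx & Hd).
  exists U. repeat split; auto. intros y Hy. specialize (Hd y Hy).
  replace (- f y - - f x) with (- (f y - f x)) by ring. now rewrite Rabs_Ropp.
Qed.

Lemma uniform_average_near_point f zs z v eps :
  continuous_real op f -> (forall x, 0 <= f x <= 1) -> zs <> nil ->
  (forall r, integral_is op (uniform zs) f r -> Rabs (r - v) < eps) ->
  (forall r, integral_is op (uniform (z :: nil)) f r -> Rabs (r - v) < eps) ->
  f z - 2 * eps < lsum f zs / INR (length zs).
Proof.
  intros Hf Hf01 Hne H1 H2.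
  destruct (integral_prob_exists op _ f (uniform_prob op zs Hne) Hf01) as [r1 Hr1].
  destruct (integral_prob_exists op _ f (uniform_prob op (z :: nil) ltac:(discriminate)) Hf01)
    as [r2 Hr2].
  pose proof (integral_uniform_le op zs f r1 Hne Hr1).
  pose proof (integral_dirac_ge op z f r2 (fun x => proj1 (Hf01 x))
    (borel_open op _ (open_lt f _ Hf)) Hr2).
  specialize (H1 r1 Hr1). specialize (H2 r2 Hr2). apply Rabs_def2 in H1, H2. lra.
Qed.

Context (Hcpt : compact_sp op) (Hhaus : hausdorff_sp op).

(* Separate [x] from each [y] outside [O] by Hausdorffness, then cover the space by [O]
   and the chosen neighbourhoods of the [y]s; finitely many suffice. *)
Lemma regular_open x O : op O -> O x -> exists P, op P /\ P x /\ forall z, closure P z -> O z.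
Proof.
  intros HO Hx.
  assert (Hch : forall y, exists UV : (X -> Prop) * (X -> Prop), ~ O y ->
    op (fst UV) /\ op (snd UV) /\ fst UV x /\ snd UV y /\
    forall z, fst UV z -> snd UV z -> False).
  { intro y. destruct (classic (O y)) as [Hy|Hy]; [exists (O, O); tauto|].
    destruct (Hhaus x y) as (U & V & HU); [intros ->; auto|]. exists (U, V). auto. }
  destruct (choice _ Hch) as [UV HUV].
  destruct (Hcpt X (fun y z => (O y -> O z) /\ (~ O y -> snd (UV y) z))) as [l Hl].
  { intro y. apply open_inter; apply open_cond; auto. intro Hy. apply HUV; auto. }
  { intro y. exists y. split; auto. intro Hy. apply HUV; auto. }
  exists (fun z => forall y, In y l -> ~ O y -> fst (UV y) z). split; [|split].
  - apply open_finite_inter. intros y Hy. apply HUV; auto.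
  - intros y _ Hy. apply HUV; auto.
  - intros z Hz. apply NNPP. intro Hnz. destruct (Hl z) as (y & Hy & [H1 H2]).
    destruct (classic (O y)) as [HOy|HOy]; [auto|].
    destruct (HUV y HOy) as (_ & HV & _ & _ & Hd).
    destruct (Hz _ HV (H2 HOy)) as (q & Hq1 & Hq2). apply (Hd q); auto.
Qed.

(* The closure of [A] is compact, so finitely many of the neighbourhoods given by
   [regular_open] at its points cover it. *)
Lemma closure_interpolate A B : op B -> (forall z, closure A z -> B z) ->
  exists C, op C /\ (forall z, closure A z -> C z) /\ (forall z, closure C z -> B z).
Proof.
  intros HB HAB. set (K := closure A).
  assert (Hch : forall k, exists P, K k -> op P /\ P k /\ forall z, closure P z -> B z).
  { intro k. destruct (classic (K k)) as [Hk|Hk].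
    - destruct (regular_open k B HB (HAB k Hk)) as (P & HP). exists P; auto.
    - exists B; tauto. }
  destruct (choice _ Hch) as [P HP].
  destruct (Hcpt X (fun k z => (K k -> P k z) /\ (~ K k -> ~ K z))) as [l Hl].
  { intro k. apply open_inter; apply open_cond; [intro Hk; apply HP; auto|intros _; apply open_not_closure]. }
  { intro k. exists k. split; auto. intro Hk. apply HP; auto. }
  exists (fun z => exists k, In k l /\ K k /\ P k z). split; [|split].
  - apply (open_ext (fun z => exists k, (In k l /\ K k) /\ P k z)); [firstorder|].
    apply open_union. intros k [_ Hk]. apply HP; auto.
  - intros z Hz. destruct (Hl z) as (k & Hk & [H1 H2]).
    destruct (classic (K k)) as [HKk|HKk]; [eauto|]. exfalso; apply (H2 HKk); auto.
  - intros z Hz. destruct (closure_finite_union l K P z Hz) as (k & _ & HKk & Hc).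
    now apply (HP k HKk).
Qed.

End Topology.

(** * Urysohn's lemma *)

Lemma ex_least (P : nat -> Prop) :
  (exists n, P n) -> exists n, P n /\ forall j, (j < n)%nat -> ~ P j.
Proof.
  intros [n Hn]. revert Hn. induction n as [n IH] using lt_wf_ind. intro Hn.
  destruct (classic (exists j, (j < n)%nat /\ P j)) as [(j & Hj & HPj)|Hno].
  - apply (IH j Hj HPj).
  - exists n. split; auto. intros j Hj HPj. apply Hno; eauto.
Qed.

Lemma INR_pow2_pos m : 0 < INR (2 ^ m).
Proof. apply lt_0_INR. apply Nat.neq_0_lt_0, Nat.pow_nonzero. lia. Qed.

Lemma dyadic_small eps : 0 < eps -> exists m, 2 / INR (2 ^ m) < eps.
Proof.
  intro Heps. destruct (archimed_cor1 (eps / 2)) as (m & Hm & Hm0); [lra|]. exists m.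
  assert (INR m <= INR (2 ^ m)) by (apply le_INR, Nat.lt_le_incl, Nat.pow_gt_lin_r; lia).
  assert (0 < INR m) by (apply lt_0_INR; lia).
  assert (/ INR (2 ^ m) <= / INR m) by (apply Rinv_le_contravar; auto).
  unfold Rdiv. lra.
Qed.

Lemma odd_double_succ a : Nat.even (S (2 * a)) = false.
Proof. rewrite Nat.even_succ, <- Nat.negb_even, Nat.even_even. reflexivity. Qed.

Section Urysohn.
Context {X : Type} (op : (X -> Prop) -> Prop) (Htop : is_topology X op)
  (Hcpt : compact_sp op) (Hhaus : hausdorff_sp op).

Definition interpolant (A B : X -> Prop) : X -> Prop :=
  epsilon (inhabits (fun _ : X => True)) (fun C =>
    op C /\ (forall z, closure op A z -> C z) /\ (forall z, closure op C z -> B z)).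

Lemma interpolant_spec A B : op B -> (forall z, closure op A z -> B z) ->
  op (interpolant A B) /\ (forall z, closure op A z -> interpolant A B z) /\
  (forall z, closure op (interpolant A B) z -> B z).
Proof. intros HB HAB. unfold interpolant. apply epsilon_spec. now apply closure_interpolate. Qed.

Variables (A0 B0 : X -> Prop).
Hypotheses (HA0 : op A0) (HB0 : op B0) (HAB0 : forall z, closure op A0 z -> B0 z).

(* [dyadic m k] is the open set attached to the dyadic [k / 2^m] in [0, 1]; each level
   inserts an interpolant between consecutive sets of the previous one. *)
Fixpoint dyadic (m k : nat) : X -> Prop :=
  match m with
  | O => match k with O => A0 | S _ => B0 end
  | S m' => if Nat.even k then dyadic m' (Nat.div2 k)
            else interpolant (dyadic m' (Nat.div2 k)) (dyadic m' (S (Nat.div2 k)))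
  end.

Lemma dyadic_even m a : dyadic (S m) (2 * a) = dyadic m a.
Proof. cbn [dyadic]. rewrite Nat.even_even, Nat.div2_double. reflexivity. Qed.

Lemma dyadic_odd m a : dyadic (S m) (S (2 * a)) = interpolant (dyadic m a) (dyadic m (S a)).
Proof. cbn [dyadic]. rewrite odd_double_succ, Nat.div2_succ_double. reflexivity. Qed.

Lemma dyadic_chain m : (forall k, (k <= 2 ^ m)%nat -> op (dyadic m k)) /\
  (forall k, (k < 2 ^ m)%nat -> forall z, closure op (dyadic m k) z -> dyadic m (S k) z).
Proof.
  induction m as [|m [IH1 IH2]].
  - split; [intros [|[|k]] Hk; auto; simpl in Hk; lia|].
    intros [|k] Hk; [auto|simpl in Hk; lia].
  - rewrite Nat.pow_succ_r'.
    assert (Hint : forall a, (a < 2 ^ m)%nat ->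
      op (dyadic (S m) (S (2 * a))) /\
      (forall z, closure op (dyadic m a) z -> dyadic (S m) (S (2 * a)) z) /\
      (forall z, closure op (dyadic (S m) (S (2 * a))) z -> dyadic m (S a) z))
      by (intros a Ha; rewrite dyadic_odd; apply interpolant_spec; [apply IH1; lia|auto]).
    split; intros k Hk; destruct (Nat.Even_or_Odd k) as [[a ->]|[a ->]];
      rewrite ?Nat.add_1_r in *.
    + rewrite dyadic_even. apply IH1. lia.
    + apply Hint. lia.
    + rewrite dyadic_even. apply Hint. lia.
    + replace (S (S (2 * a))) with (2 * S a)%nat by lia. rewrite dyadic_even. apply Hint. lia.
Qed.

Lemma dyadic_zero m : dyadic m 0 = A0.
Proof. induction m; [reflexivity|]. now rewrite <- (Nat.mul_0_r 2), dyadic_even. Qed.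

Lemma dyadic_full m : dyadic m (2 ^ m) = B0.
Proof. induction m; [reflexivity|]. now rewrite Nat.pow_succ_r', dyadic_even. Qed.

Lemma dyadic_refine m j k : dyadic (m + j) (k * 2 ^ j) = dyadic m k.
Proof.
  induction j as [|j IH]; [now rewrite Nat.add_0_r, Nat.mul_1_r|].
  rewrite Nat.add_succ_r, Nat.pow_succ_r', Nat.mul_comm, <- Nat.mul_assoc,
    dyadic_even, Nat.mul_comm. exact IH.
Qed.

(* Above [2^m] the sets are the whole space, which makes [level m] monotone in [k]. *)
Definition level (m k : nat) : X -> Prop :=
  if Nat.leb k (2 ^ m) then dyadic m k else fun _ => True.

Lemma level_open m k : op (level m k).
Proof.
  unfold level. destruct (Nat.leb_spec k (2 ^ m)); [now apply dyadic_chain|apply Htop].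
Qed.

Lemma level_closure_succ m k z : closure op (level m k) z -> level m (S k) z.
Proof.
  unfold level. destruct (Nat.leb_spec (S k) (2 ^ m)); [|auto].
  destruct (Nat.leb_spec k (2 ^ m)); [|lia]. apply dyadic_chain; lia.
Qed.

Lemma level_mono m k k' z : (k <= k')%nat -> level m k z -> level m k' z.
Proof.
  induction 1; auto. intro Hz. apply level_closure_succ, subset_closure; auto.
Qed.

Lemma level_refine m j k : level (m + j) (k * 2 ^ j) = level m k.
Proof.
  unfold level. rewrite dyadic_refine, Nat.pow_add_r.
  assert (0 < 2 ^ j)%nat by (apply Nat.neq_0_lt_0, Nat.pow_nonzero; lia).
  destruct (Nat.leb_spec (k * 2 ^ j) (2 ^ m * 2 ^ j));
    destruct (Nat.leb_spec k (2 ^ m)); auto; nia.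
Qed.

Lemma level_cross m k m' k' z : (k' * 2 ^ m <= k * 2 ^ m')%nat -> level m' k' z -> level m k z.
Proof.
  intros Hle Hz. rewrite <- (level_refine m m' k), Nat.add_comm.
  apply (level_mono _ (k' * 2 ^ m)); [lia|]. now rewrite level_refine.
Qed.

Lemma level_zero m : level m 0 = A0.
Proof. unfold level. simpl. apply dyadic_zero. Qed.

Lemma level_full m : level m (2 ^ m) = B0.
Proof. unfold level. rewrite Nat.leb_refl. apply dyadic_full. Qed.

Lemma level_beyond m z : level m (S (2 ^ m)) z.
Proof. unfold level. destruct (Nat.leb_spec (S (2 ^ m)) (2 ^ m)); [lia|auto]. Qed.

Definition level_values (x : X) (r : R) : Prop :=
  r = 0 \/ exists m k, level m k x /\ r = 1 - INR k / INR (2 ^ m).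

Lemma level_values_le1 x r : level_values x r -> r <= 1.
Proof.
  intros [->|(m & k & _ & ->)]; [lra|]. pose proof (pos_INR k). pose proof (INR_pow2_pos m).
  assert (0 <= INR k / INR (2 ^ m)) by (apply Rmult_le_pos; [lra|left; apply Rinv_0_lt_compat; lra]).
  lra.
Qed.

Definition urysohn_fun (x : X) : R :=
  proj1_sig (completeness (level_values x)
    (ex_intro _ 1 (level_values_le1 x)) (ex_intro _ 0 (or_introl eq_refl))).

Lemma urysohn_fun_lub x : is_lub (level_values x) (urysohn_fun x).
Proof. unfold urysohn_fun. destruct completeness; auto. Qed.

Lemma urysohn_fun_bounds x : 0 <= urysohn_fun x <= 1.
Proof.
  split; [apply urysohn_fun_lub; left; auto|].
  apply urysohn_fun_lub. intros r Hr. now apply (level_values_le1 x).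
Qed.

Lemma urysohn_fun_ge m k x : level m k x -> 1 - INR k / INR (2 ^ m) <= urysohn_fun x.
Proof. intro H. apply urysohn_fun_lub. right; eauto. Qed.

Lemma urysohn_fun_le m k x : ~ level m k x -> urysohn_fun x <= 1 - INR k / INR (2 ^ m).
Proof.
  intro H. pose proof (INR_pow2_pos m). apply urysohn_fun_lub. intros r [->|(m' & k' & Hx & ->)].
  - assert (Hk : (k <= 2 ^ m)%nat) by (apply Nat.nlt_ge; intro; apply H, (level_mono _ (S (2 ^ m))), level_beyond; lia).
    apply le_INR in Hk.
    assert (INR k / INR (2 ^ m) <= 1) by (apply (Rmult_le_reg_r (INR (2 ^ m))); auto; field_simplify; lra).
    lra.
  - pose proof (INR_pow2_pos m').
    destruct (Rle_lt_dec (INR k / INR (2 ^ m)) (INR k' / INR (2 ^ m'))) as [Hle|Hlt]; [lra|].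
    exfalso. apply H, (level_cross m k m' k'); auto. apply Nat.lt_le_incl, INR_lt. rewrite !mult_INR.
    apply (Rmult_lt_reg_r (/ (INR (2 ^ m) * INR (2 ^ m')))); [apply Rinv_0_lt_compat; nra|].
    replace (INR k' * INR (2 ^ m) * / (INR (2 ^ m) * INR (2 ^ m'))) with (INR k' / INR (2 ^ m')) by (field; lra).
    replace (INR k * INR (2 ^ m') * / (INR (2 ^ m) * INR (2 ^ m'))) with (INR k / INR (2 ^ m)) by (field; lra).
    exact Hlt.
Qed.

(* Allowing [k - j < 0] (as a real) spares a case split below. *)
Lemma urysohn_fun_le_sub m k j x : ((j <= k)%nat -> ~ level m (k - j) x) ->
  urysohn_fun x <= 1 - (INR k - INR j) / INR (2 ^ m).
Proof.
  intro H. destruct (Nat.le_gt_cases j k) as [Hjk|Hjk].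
  - rewrite <- minus_INR by auto. apply urysohn_fun_le; auto.
  - pose proof (urysohn_fun_bounds x). pose proof (INR_pow2_pos m).
    assert (INR k < INR j) by (apply lt_INR; lia).
    assert (0 < / INR (2 ^ m)) by (apply Rinv_0_lt_compat; lra).
    unfold Rdiv. nra.
Qed.

(* With [k] least such that [x] is in [level m k], the neighbourhood
   [level m k \ closure (level m (k - 2))] of [x] confines [urysohn_fun] to an interval of
   length [2 / 2^m]. *)
Lemma urysohn_fun_continuous : continuous_real op urysohn_fun.
Proof.
  intros x eps Heps. destruct (dyadic_small eps Heps) as [m Hm].
  destruct (ex_least (fun k => level m k x)) as (k & Hk & Hmin); [eexists; apply level_beyond|].
  exists (fun y => level m k y /\ ((2 <= k)%nat -> ~ closure op (level m (k - 2)) y)).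
  split; [|split].
  - apply (open_inter op Htop); [apply level_open|].
    apply (open_cond op Htop). intros _. now apply open_not_closure.
  - split; auto. intros Hk2 Hc. apply level_closure_succ in Hc.
    apply (Hmin (k - 1)%nat); [lia|]. now replace (k - 1)%nat with (S (k - 2)) by lia.
  - intros y [Hy Hy'].
    pose proof (urysohn_fun_ge m k x Hk). pose proof (urysohn_fun_ge m k y Hy).
    assert (urysohn_fun x <= 1 - (INR k - INR 1) / INR (2 ^ m))
      by (apply urysohn_fun_le_sub; intros; apply Hmin; lia).
    assert (urysohn_fun y <= 1 - (INR k - INR 2) / INR (2 ^ m))
      by (apply urysohn_fun_le_sub; intros H2 Hl; now apply (Hy' H2), subset_closure).
    assert (0 < / INR (2 ^ m)) by (apply Rinv_0_lt_compat, INR_pow2_pos).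
    unfold Rdiv in *. simpl INR in *. apply Rabs_def1; lra.
Qed.

End Urysohn.

Lemma urysohn {X : Type} (op : (X -> Prop) -> Prop) (Htop : is_topology X op)
  (Hcpt : compact_sp op) (Hhaus : hausdorff_sp op) (w : X) (V : X -> Prop) :
  op V -> V w -> exists f : X -> R, continuous_real op f /\ (forall x, 0 <= f x <= 1) /\
    f w = 1 /\ (forall x, 0 < f x -> V x).
Proof.
  intros HV Hw. destruct (regular_open op Htop Hcpt Hhaus w V HV Hw) as (A0 & HA0 & HwA & HAV).
  exists (urysohn_fun op A0 V). split; [|split; [|split]].
  - now apply urysohn_fun_continuous.
  - apply urysohn_fun_bounds.
  - pose proof (urysohn_fun_bounds op A0 V w). pose proof (urysohn_fun_ge op A0 V 0 0 w).
    rewrite level_zero in H0. simpl in H0. specialize (H0 HwA). lra.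
  - intros x Hx. apply NNPP. intro Hn.
    pose proof (urysohn_fun_le op Htop Hcpt Hhaus A0 V HA0 HV HAV 0 1 x) as H.
    rewrite <- (Nat.pow_0_r 2) in H at 1. rewrite level_full in H. simpl in H. specialize (H Hn). lra.
Qed.

(** * Strongly proximal actions *)

Section Nets.
Context {D : Type} (le : D -> D -> Prop) (Hdir : directed D le).

Lemma eventually_and (P Q : D -> Prop) :
  (exists d0, forall d, le d0 d -> P d) -> (exists d0, forall d, le d0 d -> Q d) ->
  exists d0, forall d, le d0 d -> P d /\ Q d.
Proof.
  intros [d1 H1] [d2 H2]. destruct (dir_up _ _ Hdir d1 d2) as (c & Hc1 & Hc2).
  exists c. intros d Hd. split; [apply H1|apply H2]; eapply (dir_trans _ _ Hdir); eauto.
Qed.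

Lemma eventually_all {I : Type} (P : I -> D -> Prop) (l : list I) :
  (forall i, In i l -> exists d0, forall d, le d0 d -> P i d) ->
  exists d0, forall d, le d0 d -> forall i, In i l -> P i d.
Proof.
  induction l as [|a l IH]; intro H.
  - destruct (dir_inh _ _ Hdir) as [d0]. exists d0. intros d _ i [].
  - destruct (eventually_and (P a) (fun d => forall i, In i l -> P i d)) as [d0 Hd0].
    + apply H. left; auto.
    + apply IH. intros; apply H; right; auto.
    + exists d0. intros d Hd i [<-|Hi]; [exact (proj1 (Hd0 d Hd))|exact (proj2 (Hd0 d Hd) i Hi)].
Qed.

Lemma weak_star_lim_pair_close {X : Type} (op : (X -> Prop) -> Prop) {I : Type}
  (F : I -> X -> R) (l : list I) nu1 nu2 lam eps :
  prob_measure op lam -> (forall i, continuous_real op (F i) /\ forall x, 0 <= F i x <= 1) ->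
  0 < eps -> weak_star_lim op le nu1 lam -> weak_star_lim op le nu2 lam ->
  exists d, forall i, In i l -> exists v,
    (forall r, integral_is op (nu1 d) (F i) r -> Rabs (r - v) < eps) /\
    (forall r, integral_is op (nu2 d) (F i) r -> Rabs (r - v) < eps).
Proof.
  intros Hlam HF Heps H1 H2.
  destruct (eventually_all (fun i d => exists v,
    (forall r, integral_is op (nu1 d) (F i) r -> Rabs (r - v) < eps) /\
    (forall r, integral_is op (nu2 d) (F i) r -> Rabs (r - v) < eps)) l) as [d0 Hd0].
  - intros i _. destruct (HF i) as [Hc Hb].
    destruct (integral_prob_exists op lam (F i) Hlam Hb) as [v Hv].
    assert (Hclose : forall nu, weak_star_lim op le nu lam -> exists d0, forall d, le d0 d ->
      forall r, integral_is op (nu d) (F i) r -> Rabs (r - v) < eps)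
      by (intros nu Hnu; exact (Hnu (F i) Hc v Hv eps Heps)).
    destruct (eventually_and _ _ (Hclose nu1 H1) (Hclose nu2 H2)) as [d1 Hd1].
    exists d1. intros d Hd. exists v. exact (Hd1 d Hd).
  - exists d0. apply Hd0, (dir_refl _ _ Hdir).
Qed.

End Nets.

Section Boundary.
Context (G : Type) (mul : G -> G -> G) (e : G)
  (X : Type) (op : (X -> Prop) -> Prop) (act : G -> X -> X)
  (Htop : is_topology X op) (Hcpt : compact_sp op) (Hhaus : hausdorff_sp op)
  (Hact : is_action mul e op act).

Lemma bump_into_open (Hmin : minimal_action op act) U w : op U -> (exists y, U y) ->
  exists h f, continuous_real op f /\ (forall x, 0 <= f x <= 1) /\ f w = 1 /\
    (forall z, 0 < f z -> U (act h z)).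
Proof.
  intros HU HUne. destruct (Hmin w U HU HUne) as [h Hh].
  destruct (urysohn op Htop Hcpt Hhaus w (fun z => U (act h z))) as (f & Hf); auto.
  - now apply (proj2 (proj2 Hact)).
  - exists h, f. exact Hf.
Qed.

(* Cover the space by finitely many sets [f_w > 1 - eps] with [f_w] a bump mapped into [U]
   by [h_w]. Strong proximality moves the uniform measure on [ys] and a Dirac mass so
   close together, when tested against the [f_w], that the Dirac mass, which sits where
   some [f_w > 1 - eps], forces the average of [f_w] over the moved [ys] above
   [1 - 3 eps]; with [eps = 1/(4 N)] every moved point has [f_w > 0]. *)
Lemma boundary_contracts (Hbd : G_boundary op act) (ys : list X) (U : X -> Prop) :
  ys <> nil -> op U -> (exists y, U y) -> exists g, forall y, In y ys -> U (act g y).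
Proof.
  intros Hne HU HUne. destruct Hbd as [Hmin Hsp]. destruct HUne as [y0 Hy0].
  set (N := INR (length ys)). assert (HN : 0 < N) by now apply length_pos.
  set (eps := / (4 * N)). assert (Heps : 0 < eps) by (apply Rinv_0_lt_compat; lra).
  assert (Hbump : forall w, exists p : G * (X -> R), continuous_real op (snd p) /\
    (forall x, 0 <= snd p x <= 1) /\ snd p w = 1 /\ (forall z, 0 < snd p z -> U (act (fst p) z))).
  { intro w. destruct (bump_into_open Hmin U w HU) as (h & f & Hf); eauto. exists (h, f); exact Hf. }
  destruct (choice _ Hbump) as [hf Hhf]. set (F := fun w => snd (hf w)).
  destruct (Hcpt X (fun w z => 1 - eps < F w z)) as [ws Hws].
  { intro w. apply open_gt; auto. apply Hhf. }
  { intro x. exists x. unfold F. rewrite (proj1 (proj2 (proj2 (Hhf x)))). lra. }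
  destruct (Hsp (uniform ys) (uniform (y0 :: nil)) (uniform_prob op ys Hne)
      (uniform_prob op (y0 :: nil) ltac:(discriminate))) as (D & le & t & Hdir & lam & Hlam & H1 & H2).
  destruct (weak_star_lim_pair_close le Hdir op F ws _ _ lam eps Hlam
    (fun w => conj (proj1 (Hhf w)) (proj1 (proj2 (Hhf w)))) Heps H1 H2) as [d Hd].
  destruct (Hws (act (t d) y0)) as (w & Hw & Hwy0).
  destruct (Hd w Hw) as (v & Hv1 & Hv2).
  rewrite !uniform_push in Hv1, Hv2. simpl map in Hv2.
  assert (Hne' : map (act (t d)) ys <> nil) by (destruct ys; [congruence|discriminate]).
  pose proof (uniform_average_near_point op Htop (F w) _ _ v eps (proj1 (Hhf w))
    (proj1 (proj2 (Hhf w))) Hne' Hv1 Hv2) as Havg.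
  assert (H3eps : 3 * eps < / N)
    by (unfold eps; rewrite Rinv_mult; pose proof (Rinv_0_lt_compat N HN); lra).
  exists (mul (fst (hf w)) (t d)). intros y Hy. rewrite (proj1 (proj2 Hact)).
  apply Hhf. apply (average_near_one_pos _ (map (act (t d)) ys)).
  - now apply in_map.
  - intros; apply Hhf.
  - rewrite length_map in Havg |- *. fold N in Havg |- *. unfold F in *. lra.
Qed.

End Boundary.

(** * Intersections of conjugate stabilizers *)

Section Stabilizers.
Context (G : Type) (mul : G -> G -> G) (inv : G -> G) (e : G)
  (X : Type) (op : (X -> Prop) -> Prop) (act : G -> X -> X)
  (HG : is_group G mul inv e) (Hact : is_action mul e op act).

Lemma mulgA a b c : mul a (mul b c) = mul (mul a b) c.
Proof. exact (grp_assoc _ _ _ _ HG a b c). Qed.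
Lemma mul1g a : mul e a = a.
Proof. exact (grp_idl _ _ _ _ HG a). Qed.
Lemma mulg1 a : mul a e = a.
Proof. exact (grp_idr _ _ _ _ HG a). Qed.
Lemma mulVg a : mul (inv a) a = e.
Proof. exact (grp_invl _ _ _ _ HG a). Qed.
Lemma mulgV a : mul a (inv a) = e.
Proof. exact (grp_invr _ _ _ _ HG a). Qed.

Lemma act_e x : act e x = x.
Proof. apply Hact. Qed.

Lemma act_mul g h x : act (mul g h) x = act g (act h x).
Proof. apply Hact. Qed.

Lemma act_invl g x : act (inv g) (act g x) = x.
Proof. now rewrite <- act_mul, mulVg, act_e. Qed.

Lemma conj_cancel g s : mul (mul g (mul (mul (inv g) s) g)) (inv g) = s.
Proof. now rewrite !mulgA, mulgV, mul1g, <- mulgA, mulgV, mulg1. Qed.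

Lemma conj_intersection_iff x ts s : conj_intersection mul inv act x ts s <->
  forall t, In t ts -> act s (act t x) = act t x.
Proof.
  split.
  - intros H t Ht. destruct (H t Ht) as (h & Hh & ->). unfold stabilizer in Hh.
    now rewrite !act_mul, act_invl, Hh.
  - intros H t Ht. exists (mul (mul (inv t) s) t). split.
    + unfold stabilizer. now rewrite !act_mul, H, act_invl.
    + now rewrite !mulgA, mulgV, mul1g, <- mulgA, mulgV, mulg1.
Qed.

(* An element fixing a nonempty open set pointwise is conjugated into the intersection
   by a [g] sending all the points [t x] into that set. *)
Lemma conj_intersection_nontrivial (Htop : is_topology X op) (Hcpt : compact_sp op)
  (Hhaus : hausdorff_sp op) (Hbd : G_boundary op act) (Hnf : ~ topologically_free e op act)
  x ts : ts <> nil -> exists s, s <> e /\ conj_intersection mul inv act x ts s.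
Proof.
  intro Hne. unfold topologically_free in Hnf.
  apply not_all_ex_not in Hnf as [s0 Hs0]. apply imply_to_and in Hs0 as [Hs0e Hs0].
  apply not_all_ex_not in Hs0 as [U HU]. apply imply_to_and in HU as [HU HU'].
  apply imply_to_and in HU' as [Hfix HU']. apply not_all_ex_not in HU' as [y0 Hy0].
  apply NNPP in Hy0.
  destruct (boundary_contracts G mul e X op act Htop Hcpt Hhaus Hact Hbd
    (map (fun t => act t x) ts) U) as [g Hg]; eauto.
  { destruct ts; [congruence|discriminate]. }
  exists (mul (mul (inv g) s0) g). split.
  - intro Hs. apply Hs0e. now rewrite <- (conj_cancel g s0), Hs, mulg1, mulgV.
  - apply conj_intersection_iff. intros t Ht. rewrite !act_mul, Hfix.
    + apply act_invl.
    + apply Hg, in_map_iff. eauto.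
Qed.

Definition orbit_fixer (x : X) (s : G) : Prop := forall g, act s (act g x) = act g x.

Lemma orbit_fixer_subgroup x : is_subgroup mul inv e (orbit_fixer x).
Proof.
  split; [|split].
  - intro g. apply act_e.
  - intros a b Ha Hb g. now rewrite act_mul, Hb, Ha.
  - intros a Ha g. rewrite <- (Ha g) at 1. apply act_invl.
Qed.

Lemma orbit_fixer_normal x : is_normal mul inv (orbit_fixer x).
Proof.
  intros g h Hh y. rewrite !act_mul, <- (act_mul (inv g) y x), Hh, <- act_mul.
  now rewrite mulgA, mulgV, mul1g.
Qed.

(* Either some [s] in the intersection moves a point [g x], and adjoining [g] removes [s]
   from a finite intersection; or the intersection lies in [orbit_fixer x], a finite
   normal subgroup, hence trivial. *)
Lemma conj_intersection_infinite x
  (Hnontriv : forall ts, ts <> nil -> exists s, s <> e /\ conj_intersection mul inv act x ts s)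
  (Hnn : no_nontrivial_finite_normal mul inv e) ts :
  ts <> nil -> ~ finite_set (conj_intersection mul inv act x ts).
Proof.
  intros Hne [L HL]. revert ts Hne HL.
  induction L as [L IH] using (well_founded_ind (well_founded_ltof _ (@length G))).
  intros ts Hne HL.
  set (eq_dec := fun a b : G => excluded_middle_informative (a = b)).
  destruct (classic (exists s g, conj_intersection mul inv act x ts s /\
    act s (act g x) <> act g x)) as [(s & g & Hs & Hsg)|Hno].
  - apply (IH (remove eq_dec s L) (remove_length_lt eq_dec L s (HL s Hs)) (g :: ts));
      [discriminate|].
    intros q Hq. rewrite conj_intersection_iff in Hq. apply in_in_remove.
    + intros ->. apply Hsg, Hq. left; auto.
    + apply HL, conj_intersection_iff. intros t Ht. apply Hq. right; auto.
  - destruct (Hnontriv ts Hne) as (s & Hse & Hs). apply Hse.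
    apply (Hnn (orbit_fixer x) (orbit_fixer_subgroup x) (orbit_fixer_normal x)).
    + exists L. intros q Hq. apply HL, conj_intersection_iff. intros t _. apply Hq.
    + intro g. apply NNPP. intro Hn. apply Hno. eauto.
Qed.

End Stabilizers.

Theorem lemma2p11 (G : Type) (mul : G -> G -> G) (inv : G -> G) (e : G)
  (X : Type) (op : (X -> Prop) -> Prop) (act : G -> X -> X)
  (HG : is_group G mul inv e)
  (Htop : is_topology X op) (Hcpt : compact_sp op) (Hhaus : hausdorff_sp op)
  (Hact : is_action mul e op act)
  (Hbd : G_boundary op act)
  (Hnf : ~ topologically_free e op act) :
  (forall (x : X) (ts : list G), (ts <> nil) ->
     exists s, s <> e /\ conj_intersection mul inv act x ts s) /\
  (no_nontrivial_finite_normal mul inv e ->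
   forall (x : X) (ts : list G), (ts <> nil) ->
     ~ finite_set (conj_intersection mul inv act x ts)).
Proof.
  pose proof (conj_intersection_nontrivial G mul inv e X op act HG Hact Htop Hcpt Hhaus Hbd Hnf)
    as Hnontriv.
  split; [exact Hnontriv|].
  intros Hnn x. exact (conj_intersection_infinite G mul inv e X op act HG Hact x (Hnontriv x) Hnn).
Qed.
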